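(* Let $M\ge2$ and consider a hierarchical system as described in the context, with $L=\sum_{l=1}^ML^{(l)}$. Let $x^{(1)}:[0,\infty)\to\mathbb{R}^{N^{(1)}}$ be the solution of $\dot x^{(1)}=-Lx^{(1)}$, $x^{(1)}(0)=x^{(1)}_0$. Then \[ \lim_{t\to\infty}x^{(1)}(t)=\frac{\mathbf{1}\mathbf{1}^TK}{\mathbf{1}^TK\mathbf{1}}\,x^{(1)}_0,\qquad K=\mathrm{diag}(a_1,\dots,a_{N^{(1)}}), \] where $\mathbf 1$ is the all-ones vector in $\mathbb{R}^{N^{(1)}}$. In particular, if $a_i=a_j$ for all $i,j$, all components of $x^{(1)}(t)$ converge to the average of the components of $x^{(1)}_0$.
   Context: Hierarchical structure. Fix an integer $M\ge 2$ and positive integers $N^{(1)},\dots,N^{(M)}$; set $N^{(M+1)}:=1$. For each $l\in\{1,\dots,M\}$ the $N^{(l)}$ nodes of layer $l$ are partitioned into $N^{(l+1)}$ groups $G^{(l)}_1,\dots,G^{(l)}_{N^{(l+1)}}$ of sizes $k^{(l)}_p\ge1$ (so $\sum_pk^{(l)}_p=N^{(l)}$), numbered consecutively: group $G^{(l)}_p$ consists of nodes $\sum_{m<p}k^{(l)}_m+1,\dots,\sum_{m\le p}k^{(l)}_m$ of layer $l$. Each group $G^{(l)}_p$ carries a connected undirected graph with binary adjacency matrix; $L^{(l)}_p$ is its Laplacian (degree matrix minus adjacency matrix), and $L^{(l)}_D=\mathrm{diag}(L^{(l)}_1,\dots,L^{(l)}_{N^{(l+1)}})$ (block diagonal). Weights: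 positive constants $a_1,\dots,a_{N^{(1)}}$; $a^{(1)}_i=a_i$, $a^{(l+1)}_p=\sum_{i\in G^{(l)}_p}a^{(l)}_i$; $K^{(l)}=\mathrm{diag}(a^{(l)}_1,\dots,a^{(l)}_{N^{(l)}})^{-1}$. For $l=1,\dots,M-1$: $B^{(l)}=\mathrm{diag}(\mathbf{1}_{k^{(l)}_1},\dots,\mathbf{1}_{k^{(l)}_{N^{(l+1)}}})\in\mathbb{R}^{N^{(l)}\times N^{(l+1)}}$ ($\mathbf 1_k$ all-ones column vector), $C^{(l)}=\mathrm{diag}(C^{(l)}_1,\dots,C^{(l)}_{N^{(l+1)}})\in\mathbb{R}^{N^{(l+1)}\times N^{(l)}}$ with each $C^{(l)}_p\in\mathbb{R}^{1\times k^{(l)}_p}$ having nonnegative entries summing to $1$. $L^{(1)}=K^{(1)}L^{(1)}_D$ and $L^{(l)}=B^{(1)}\cdots B^{(l-1)}K^{(l)}L^{(l)}_DC^{(l-1)}\cdots C^{(1)}$ for $l=2,\dots,M$. (The equation $\dot x^{(1)}=-Lx^{(1)}$ is the hierarchical system without interlayer delays.) *)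

From HB Require Import structures.
From mathcomp Require Import all_boot all_order all_algebra.
From mathcomp Require Import all_classical all_reals all_analysis.
Unset Printing Implicit Defensive.
Import Order.TTheory GRing.Theory Num.Theory.
Local Open Scope ring_scope.

(* Layers are indexed 0..M-1 here (paper: 1..M); N l = N^(l+1), and
   N M plays the role of N^(M+1) = 1.  The partition of layer l into the
   N (l+1) groups is encoded by the group-assignment map
   g l : 'I_(N l) -> 'I_(N l.+1)  (node i belongs to group g l i). *)

Section Hier.
Variable R : realType.
Variable N : nat -> nat.
Variable g : forall l, 'I_(N l) -> 'I_(N l.+1).

(* B^(l) = diag(1_{k_1},...,1_{k_{N^(l+1)}}) *)
Definition grpB l : 'M[R]_(N l, N l.+1) := \matrix_(i, p) (g l i == p)%:R.

Fixpoint Bchain l : 'M[R]_(N 0%N, N l) :=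
  match l return 'M[R]_(N 0%N, N l) with
  | 0%N => 1%:M
  | l'.+1 => Bchain l' *m grpB l'
  end.

Fixpoint Cchain (C : forall l, 'M[R]_(N l.+1, N l)) l : 'M[R]_(N l, N 0%N) :=
  match l return 'M[R]_(N l, N 0%N) with
  | 0%N => 1%:M
  | l'.+1 => C l' *m Cchain C l'
  end.

Fixpoint wts (a : 'I_(N 0%N) -> R) l : 'I_(N l) -> R :=
  match l return 'I_(N l) -> R with
  | 0%N => a
  | l'.+1 => fun p => \sum_(i | g l' i == p) wts a l' i
  end.

Definition Kmat (a : 'I_(N 0%N) -> R) l : 'M[R]_(N l) :=
  diag_mx (\row_i (wts a l i)^-1).

End Hier.

Definition laplacian (R : realType) n (e : rel 'I_n) : 'M[R]_n :=
  diag_mx (\row_i (\sum_j ((e i j)%:R : R))) - \matrix_(i, j) ((e i j)%:R : R).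

Definition layerL (R : realType) (N : nat -> nat)
  (g : forall l, 'I_(N l) -> 'I_(N l.+1)) (a : 'I_(N 0%N) -> R)
  (adj : forall l, rel 'I_(N l)) (C : forall l, 'M[R]_(N l.+1, N l)) l
  : 'M[R]_(N 0%N) :=
  Bchain R N g l *m Kmat R N g a l *m laplacian R (N l) (adj l) *m Cchain R N C l.

Definition hierL (R : realType) (N : nat -> nat)
  (g : forall l, 'I_(N l) -> 'I_(N l.+1)) (a : 'I_(N 0%N) -> R)
  (adj : forall l, rel 'I_(N l)) (C : forall l, 'M[R]_(N l.+1, N l)) (M : nat)
  : 'M[R]_(N 0%N) :=
  \sum_(l < M) layerL R N g a adj C l.

From HB Require Import structures.
From mathcomp Require Import all_boot all_order all_algebra.
From mathcomp Require Import all_classical all_reals all_analysis.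
From mathcomp Require Import ring lra complex.
Import Order.TTheory GRing.Theory Num.Theory.
Import numFieldNormedType.Exports.
Local Open Scope ring_scope.
Local Open Scope classical_set_scope.

(* Every complex eigenpair (z, u) of L has either z > 0 or u constant.  This is
   proved layer by layer: if u = B^(1)...B^(l-1) w, applying C^(l-1)...C^(1)
   to L u = z u gives K^(l) L_D^(l) w = z w modulo vectors constant on the groups
   of layer l; pairing with the a^(l)-weighted conjugate of the group-centered
   part v of w kills those vectors and leaves (Laplacian form of v) = z |v|^2,
   so either z > 0 or w is constant on groups and we pass to layer l + 1.
   Hence the spectrum is nonnegative, ker L is spanned by 1, and since
   a^T L = 0 with a > 0, ker L^2 = ker L.  Cayley-Hamilton then gives
   L * prod (L - r) = 0 with r > 0, so prod (L - r) x(t) is constant, and removing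
   one factor at a time with the scalar equation f' = -(h + r f) shows that x(t)
   converges to a vector of ker L, i.e. a constant vector.  The conserved
   quantity a^T x(t) identifies the constant. *)

Section linear_ode.
Context {R : realType}.

Lemma derivable_continuous_within (f : R -> R) (T : R) : 0 < T ->
  (forall t : R, 0 < t -> derivable f t 1) -> {within `[T, +oo[, continuous f}.
Proof.
move=> T0 df; apply: continuous_in_subspaceT => t.
rewrite inE /= in_itv /= andbT => Tt.
exact/differentiable_continuous/derivable1_diffP/df/(lt_le_trans T0 Tt).
Qed.

Lemma is_derive0_cst (f : R -> R) : (forall t : R, 0 < t -> is_derive t 1 f 0) ->
  forall s t : R, 0 < s -> 0 < t -> f s = f t.
Proof.
move=> df; suff le_cst (s t : R) : 0 < s -> s <= t -> f s = f t.
  by move=> s t s0 t0; case: (leP s t) => [|/ltW] st; [|symmetry]; apply: le_cst.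
move=> s0 st.
have df' (u : R) : u \in `]s, t[%R -> is_derive u 1 f 0.
  by rewrite in_itv /= => /andP[su _]; apply: df (lt_trans s0 su).
have fc : {within `[s, t], continuous f}.
  apply: (@continuous_subspaceW _ _ _ `[s, +oo[).
    by move=> u /=; rewrite !in_itv /= => /andP[->].
  by apply: derivable_continuous_within => // u /df [].
have [u _] := MVT_segment st df' fc.
by rewrite mul0r => /eqP; rewrite subr_eq0 => /eqP.
Qed.

Lemma is_derive_expR_weighted (f : R -> R) (r c t df : R) :
  is_derive t 1 f df ->
  is_derive t 1 (fun s => expR (r * s) * (f s - c)) (expR (r * t) * (r * (f t - c) + df)).
Proof.
move=> dft.
have dE : is_derive t 1 (fun s => expR (r * s)) (expR (r * t) * r).
  apply: (@is_derive1_comp R expR (fun s => r * s)).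
  by have := @is_deriveZ R R R id r t 1 1 (is_derive_id _ _); rewrite /= scaler1.
have dfc : is_derive t 1 (fun s => f s - c) (df - 0) by exact: is_deriveB.
rewrite (_ : (fun s => _) = (fun s => expR (r * s)) * (fun s => f s - c)) //.
move/is_derive_eq: (is_deriveM dE dfc); apply.
by rewrite subr0 /GRing.scale /=; ring.
Qed.

Lemma gronwall_le {f df : R -> R} {r c T : R} : 0 < T ->
  (forall t : R, 0 < t -> is_derive t 1 f (df t)) ->
  (forall t : R, T < t -> df t <= - r * (f t - c)) ->
  forall t : R, T <= t -> expR (r * t) * (f t - c) <= expR (r * T) * (f T - c).
Proof.
move=> T0 dft dfle t Tt.
pose psi s := expR (r * s) * (f s - c).
have dpsi (u : R) : 0 < u -> is_derive u 1 psi (expR (r * u) * (r * (f u - c) + df u)).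
  by move=> /dft; apply: is_derive_expR_weighted.
have itv_gt0 (u : R) : u \in `]T, +oo[%R -> 0 < u.
  by rewrite in_itv /= andbT; apply: lt_trans.
apply: (@ler0_derive1_nincry R psi T) => // [u /itv_gt0 /dpsi []//|u uT|].
- rewrite derive1E (@derive_val _ _ _ _ _ _ _ (dpsi u (itv_gt0 u uT))).
  rewrite mulr_ge0_le0 ?expR_ge0 //.
  by move: uT; rewrite in_itv /= andbT => /dfle; lra.
- by apply: derivable_continuous_within => // u /dpsi [].
Qed.

Lemma linear_ode_eventually_le {f h : R -> R} {r m e : R} : 0 < r -> 0 < e ->
  (forall t : R, 0 < t -> is_derive t 1 f (- (h t + r * f t))) ->
  h t @[t --> +oo] --> m ->
  \forall t \near +oo, f t <= - (m / r) + e.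
Proof.
move=> r0 e0 df hm.
have re0 : 0 < r * e / 2 by rewrite divr_gt0 ?mulr_gt0.
have [T [_ hT]] := (cvgrPdist_le _ _).1 hm _ re0.
set T1 := Num.max T 1; set c := - (m / r) + e / 2.
have T1_gt0 : 0 < T1 by rewrite lt_max ltr01 orbT.
have dfle (t : R) : T1 < t -> - (h t + r * f t) <= - r * (f t - c).
  rewrite gt_max => /andP[/hT + _]; rewrite ler_distlC => /andP[hlo _].
  have -> : - r * (f t - c) = - (m - r * e / 2 + r * f t).
    by rewrite /c; field; rewrite gt_eqF.
  by rewrite lerN2 lerD2r.
have decay := gronwall_le T1_gt0 df dfle.
set A := expR (r * T1) * (f T1 - c) in decay.
near=> t.
have tT1 : T1 <= t by near: t; apply: nbhs_pinfty_ge; exact: num_real.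
have tA : 2 * `|A| / (r * e) <= t by near: t; apply: nbhs_pinfty_ge; exact: num_real.
have A_le : A <= e / 2 * expR (r * t).
  have rt_le : r * t <= expR (r * t) by have := expR_ge1Dx (r * t); lra.
  rewrite ler_pdivrMr ?mulr_gt0 // in tA.
  apply: le_trans (ler_norm A) _; apply: le_trans (_ : e / 2 * (r * t) <= _).
    have -> : e / 2 * (r * t) = t * (r * e) / 2 by ring.
    lra.
  by rewrite ler_pM2l ?divr_gt0.
have := le_trans (decay t tT1) A_le; rewrite [X in X <= _]mulrC ler_pM2r ?expR_gt0 //.
by rewrite /c; lra.
Unshelve. all: by end_near. Qed.

Lemma cvg_linear_ode {f h : R -> R} {r m : R} : 0 < r ->
  (forall t : R, 0 < t -> is_derive t 1 f (- (h t + r * f t))) ->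
  h t @[t --> +oo] --> m -> f t @[t --> +oo] --> - (m / r).
Proof.
move=> r0 df hm; apply/cvgrPdist_le => e e0.
have dNf (t : R) : 0 < t -> is_derive t 1 (- f) (- ((- h) t + r * (- f) t)).
  by move=> t0; apply: is_derive_eq; [exact: is_deriveN (df t t0) | rewrite /= mulrN opprD].
have hNm : (- h) t @[t --> +oo] --> - m by exact: cvgN.
have lo := linear_ode_eventually_le r0 e0 dNf hNm.
have hi := linear_ode_eventually_le r0 e0 df hm.
near=> t; rewrite ler_distlC; apply/andP; split; last by near: t.
have lo_t : - f t <= - (- m / r) + e by near: t.
by rewrite mulNr opprK in lo_t; lra.
Unshelve. all: by end_near. Qed.
End linear_ode.

Section matrix_calculus.
Context {R : realType}.

Lemma cvg_mxP {T : Type} (F : set_system T) {FF : Filter F} {m n : nat}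
    (y : T -> 'M[R]_(m, n)) (l : 'M[R]_(m, n)) :
  y @ F --> l <-> forall i j, (fun t => y t i j) @ F --> l i j.
Proof.
split=> [yl i j|yl].
  exact: (continuous_cvg _ (@coord_continuous R m n i j l)).
apply/cvgrPdist_le => e e0; near=> t.
rewrite /Num.Def.normr /= mx_normrE (bigmax_le _ (ltW e0)) //= => ij _.
rewrite !mxE /=; move: ij; near: t; apply: filter_forall => -[i j].
exact: (cvgrPdist_le _ _).1 (yl i j) e e0.
Unshelve. all: by end_near. Qed.

Lemma cvg_mulmx {T : Type} {F : set_system T} {FF : Filter F} {m n p : nat}
    (A : 'M[R]_(m, n)) {y : T -> 'M[R]_(n, p)} {l : 'M[R]_(n, p)} :
  y @ F --> l -> (fun t => A *m y t) @ F --> A *m l.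
Proof.
move=> /cvg_mxP yl; apply/cvg_mxP => i j; rewrite mxE; under eq_fun do rewrite mxE.
apply: cvg_big => [|k _]; first exact: add_continuous.
exact: cvgMl_tmp.
Qed.

Lemma is_derive_mxP {m n : nat} (y : R -> 'M[R]_(m, n)) (t : R) (D : 'M[R]_(m, n)) :
  is_derive t 1 y D <-> forall i j, is_derive t 1 (fun s => y s i j) (D i j).
Proof.
split=> [[dy <-] i j|dy].
  have dyij := (derivable_mxP y t 1).1 dy i j.
  by apply: DeriveDef => //; rewrite derive_mx // mxE.
have dery : derivable y t 1 by apply/derivable_mxP => i j; case: (dy i j).
apply: DeriveDef => //; rewrite derive_mx //; apply/matrixP => i j.
by rewrite mxE; case: (dy i j).
Qed.

Lemma is_derive_mulmx {m n p : nat} (A : 'M[R]_(m, n)) (y : R -> 'M[R]_(n, p)) (t : R)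
    (D : 'M[R]_(n, p)) :
  is_derive t 1 y D -> is_derive t 1 (fun s => A *m y s) (A *m D).
Proof.
move=> /is_derive_mxP dy; apply/is_derive_mxP => i j.
have -> : (fun s => (A *m y s) i j) = \sum_k (fun s => A i k * y s k j).
  by apply/funext => s; rewrite fct_sumE mxE.
by rewrite mxE; apply: is_derive_sum.
Qed.
End matrix_calculus.

Section matrix_linear_ode.
Context {R : realType}.

(* [(L - r%:M) *m y] solves the same equation, and each coordinate [f] of [y]
   solves [f' = - (h + r f)] with [h] the same coordinate of [(L - r%:M) *m y]. *)
Lemma cvg_linear_ode_mx {n} (L : 'M[R]_n) (s : seq R) (y : R -> 'cV[R]_n) (l : 'cV[R]_n) :
  all (fun r => 0 < r) s ->
  (forall t : R, 0 < t -> is_derive t 1 y (- (L *m y t))) ->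
  (fun t => \prod_(r <- s) (L - r%:M) *m y t) @ +oo --> l ->
  y t @[t --> +oo] --> (\prod_(r <- s) (- r))^-1 *: l.
Proof.
elim/last_ind: s y l => [|s r IH] y l.
  by move=> _ _; rewrite !big_nil invr1 scale1r; under eq_fun do rewrite mul1mx.
rewrite all_rcons => /andP[r0 s0] dy; rewrite -cats1 !big_cat !big_seq1 /= => y_cvg.
pose y1 t := (L - r%:M) *m y t.
have dy1 (t : R) : 0 < t -> is_derive t 1 y1 (- (L *m y1 t)).
  move=> t0; apply: is_derive_eq; first exact: is_derive_mulmx (dy t t0).
  by rewrite /y1 mulmxN !mulmxA mulmxBl mulmxBr scalar_mxC.
have y1_cvg : (fun t => \prod_(r <- s) (L - r%:M) *m y1 t) @ +oo --> l.
  by move: y_cvg; under eq_fun do rewrite -mulmxE -mulmxA.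
have {IH y1_cvg} := IH y1 l s0 dy1 y1_cvg.
set k := (\prod_(r <- s) - r)^-1 => /cvg_mxP y1_lim; apply/cvg_mxP => i j.
have -> : (((\prod_(r <- s) - r) * - r)^-1 *: l) i j = - ((k *: l) i j / r).
  by rewrite !mxE /k invfM invrN; ring.
apply: (cvg_linear_ode r0) (y1_lim i j) => t t0.
have /is_derive_mxP/(_ i j)/is_derive_eq := dy t t0; apply.
by rewrite /y1 mulmxBl mul_scalar_mx !mxE; ring.
Qed.

Lemma linear_ode_conserved {n} {A : 'M[R]_n} {w : 'rV[R]_n} {x : R -> 'cV[R]_n}
    {x0 : 'cV[R]_n} :
  w *m A = 0 -> x t @[t --> 0^'+] --> x0 ->
  (forall t : R, 0 < t -> is_derive t 1 x (- (A *m x t))) ->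
  forall t : R, 0 < t -> w *m x t = w *m x0.
Proof.
move=> wA x_x0 dx t t0; apply/rowP => j; rewrite (ord1 j).
have wx_cst (s : R) : 0 < s -> (w *m x s) 0 0 = (w *m x t) 0 0.
  move=> s0; apply: (is_derive0_cst (fun s => (w *m x s) 0 0)) => // u u0.
  have /(is_derive_mulmx w)/is_derive_mxP/(_ 0 0)/is_derive_eq := dx u u0; apply.
  by rewrite mulmxN mulmxA wA mul0mx oppr0 mxE.
have wx_cvg : (w *m x s) 0 0 @[s --> 0^'+] --> (w *m x t) 0 0.
  apply: cvg_near_cst; near=> s; apply: wx_cst.
  by near: s; exact: nbhs_right_gt.
have wx0_cvg : (w *m x s) 0 0 @[s --> 0^'+] --> (w *m x0) 0 0.
  by move/(cvg_mulmx w)/cvg_mxP: x_x0; apply.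
exact: cvg_unique wx_cvg wx0_cvg.
Unshelve. all: by end_near. Qed.
End matrix_linear_ode.

Lemma char_poly_trmx (F : comNzRingType) n (A : 'M[F]_n) : char_poly A^T = char_poly A.
Proof.
rewrite /char_poly -det_tr; congr (\det _).
by apply/matrixP => i j; rewrite !mxE eq_sym.
Qed.

Section nonneg_spectrum.
Context {R : realType}.
Local Notation toC := (real_complex R).

(* Eigenvalues are taken in [R[i]], where [0 <= z] means that [z] is a
   nonnegative real number. *)
Definition nonneg_spectrum {n} (A : 'M[R]_n) :=
  forall (z : R[i]) (u : 'cV[R[i]]_n), u != 0 -> map_mx toC A *m u = z *: u -> 0 <= z.

(* The roots of [char_poly A] in [R[i]] are eigenvalues, hence nonnegative reals;
   so [char_poly A] is ['X ^+ k * \prod_(r <- s) ('X - r%:P)] with all [r > 0]. *)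
Lemma nonneg_spectrum_char_poly {n} (A : 'M[R]_n) : nonneg_spectrum A ->
  exists k, exists2 s : seq R, all (fun r => 0 < r) s & A ^+ k * \prod_(r <- s) (A - r%:M) = 0.
Proof.
case: n A => [|n] A spA.
  by exists 0%N, [::] => //; apply/matrixP => -[].
set p := char_poly A.
have [rs p_split] := closed_field_poly_normal (map_poly toC p).
rewrite (monicP (monic_map _ (char_poly_monic _))) scale1r in p_split.
have rs_ge0 z : z \in rs -> 0 <= z.
  move=> zrs; have : root (map_poly toC p) z by rewrite p_split root_prod_XsubC.
  rewrite /p map_char_poly -char_poly_trmx -eigenvalue_root_char.
  move=> /eigenvalueP[v vA v0]; apply: (spA z v^T); first by rewrite trmx_eq0.
  by rewrite -[map_mx _ _]trmxK -trmx_mul vA linearZ.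
pose rsR := map (@complex.Re R) rs.
have rsR_ge0 r : r \in rsR -> 0 <= r.
  by move=> /mapP[z /rs_ge0 + ->]; rewrite lecE => /andP[].
have p_prod : p = \prod_(r <- rsR) ('X - r%:P).
  apply: (@map_poly_inj _ _ toC); rewrite p_split rmorph_prod big_map.
  apply: eq_big_seq => z zrs.
  by rewrite rmorphB /= map_polyX map_polyC /= (RRe_real (ger0_real (rs_ge0 z zrs))).
exists (count (pred1 0) rsR), [seq r <- rsR | r != 0].
  by apply/allP => r; rewrite mem_filter lt0r => /andP[-> /rsR_ge0].
have := Cayley_Hamilton A; rewrite -/p p_prod (bigID (pred1 0)) /=.
rewrite (eq_bigr (fun=> 'X)); last by move=> r /eqP ->; rewrite subr0.
rewrite big_const_seq iter_mulr_1 -big_filter rmorphM rmorphXn /= horner_mx_X.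
by rewrite rmorph_prod; under eq_bigr do rewrite rmorphB /= horner_mx_X horner_mx_C.
Qed.

Lemma mulmx_ker_sq {n p} (A : 'M[R]_n) (Q : 'M[R]_(n, p)) :
  (forall v : 'cV[R]_n, A *m (A *m v) = 0 -> A *m v = 0) ->
  A *m (A *m Q) = 0 -> A *m Q = 0.
Proof.
move=> kerA AAQ; apply/matrixP => i j.
have AQj : A *m (Q *m (delta_mx j 0 : 'cV[R]_p)) = 0.
  by apply: kerA; rewrite !mulmxA -(mulmxA A) AAQ mul0mx.
by have := congr1 (fun B : 'cV[R]_n => B i 0) AQj; rewrite mulmxA -colE !mxE.
Qed.

Lemma nonneg_spectrum_annihilator {n} (A : 'M[R]_n) : nonneg_spectrum A ->
  (forall v : 'cV[R]_n, A *m (A *m v) = 0 -> A *m v = 0) ->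
  exists2 s : seq R, all (fun r => 0 < r) s & A * \prod_(r <- s) (A - r%:M) = 0.
Proof.
move=> /nonneg_spectrum_char_poly[k [s s_pos AkP]] kerA; exists s => //.
have kerAk j (Q : 'M[R]_n) : A ^+ j.+1 * Q = 0 -> A * Q = 0.
  elim: j Q => [|j IHj] Q; first by rewrite expr1.
  by rewrite exprSr -mulrA => /IHj; apply: mulmx_ker_sq.
by case: k AkP => [|k]; [rewrite mul1r => ->; rewrite mulr0 | apply: kerAk].
Qed.

Lemma cvg_semistable_ode {n} {A : 'M[R]_n} {x : R -> 'cV[R]_n} :
  nonneg_spectrum A -> (forall v : 'cV[R]_n, A *m (A *m v) = 0 -> A *m v = 0) ->
  (forall t : R, 0 < t -> is_derive t 1 x (- (A *m x t))) ->
  exists2 xinf, x t @[t --> +oo] --> xinf & A *m xinf = 0.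
Proof.
move=> spA kerA dx; have [s s_pos AP] := nonneg_spectrum_annihilator _ spA kerA.
set P := \prod_(r <- s) (A - r%:M) in AP.
have PA : P *m A = 0.
  have AP_comm : GRing.comm A P.
    by apply: commr_prod => r _; apply: commrB; [exact: commr_refl | exact: comm_mx_scalar].
  by rewrite mulmxE -AP_comm.
have Px_cst (t : R) : 0 < t -> P *m x t = P *m x 1.
  move=> t0; apply/matrixP => i j.
  apply: (is_derive0_cst (fun s => (P *m x s) i j)) => // u u0.
  have /(is_derive_mulmx P)/is_derive_mxP/(_ i j)/is_derive_eq := dx u u0; apply.
  by rewrite mulmxN mulmxA PA mul0mx oppr0 mxE.
have Px_cvg : (fun t => P *m x t) @ +oo --> P *m x 1.
  apply: cvg_near_cst; near=> t; apply: Px_cst.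
  by near: t; apply: nbhs_pinfty_gt; exact: num_real.
exists ((\prod_(r <- s) (- r))^-1 *: (P *m x 1)); first exact: cvg_linear_ode_mx.
by rewrite -scalemxAr mulmxA (AP : A *m P = 0) mul0mx scaler0.
Unshelve. all: by end_near. Qed.

End nonneg_spectrum.

Section laplacian.
Context {R : realType}.
Local Notation toC := (real_complex R).

Lemma map_laplacian_mulmxE (S : comNzRingType) (f : {rmorphism R -> S}) {n} (e : rel 'I_n)
    m (v : 'M[S]_(n, m)) i k :
  (map_mx f (laplacian R n e) *m v) i k = \sum_j (e i j)%:R * (v i k - v j k).
Proof.
rewrite mxE; under eq_bigr do rewrite !mxE rmorphB /= rmorphMn rmorph_nat rmorph_sum mulrBl.
rewrite sumrB [X in X - _](bigD1 i) //= eqxx mulr1n [X in _ + X - _]big1 ?addr0; last first.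
  by move=> j ij; rewrite eq_sym (negbTE ij) mulr0n mul0r.
rewrite mulr_suml -sumrB; apply: eq_bigr => j _.
by rewrite rmorph_nat mulrBr.
Qed.

Lemma laplacian_mulmxE {n} (e : rel 'I_n) m (v : 'M[R]_(n, m)) i k :
  (laplacian R n e *m v) i k = \sum_j (e i j)%:R * (v i k - v j k).
Proof. by rewrite -(map_laplacian_mulmxE _ idfun) map_mx_id. Qed.

Lemma laplacian_mulmx_eq0 {n} (e : rel 'I_n) m (v : 'M[R]_(n, m)) :
  (forall i j k, e i j -> v i k = v j k) -> laplacian R n e *m v = 0.
Proof.
move=> ve; apply/matrixP => i k; rewrite laplacian_mulmxE mxE big1 // => j _.
by case: (boolP (e i j)) => [/ve -> | _]; rewrite ?subrr ?mulr0 ?mul0r.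
Qed.

Lemma trmx_laplacian {n} (e : rel 'I_n) : symmetric e -> (laplacian R n e)^T = laplacian R n e.
Proof.
move=> e_sym; apply/matrixP => i j; rewrite !mxE e_sym.
by case: (eqVneq i j) => [->|]; rewrite ?mulr0n ?mulr1n.
Qed.

Definition laplacian_form {n} (e : rel 'I_n) (v : 'cV[R[i]]_n) : R[i] :=
  \sum_i conjc (v i 0) * (map_mx toC (laplacian R n e) *m v) i 0.

Lemma laplacian_formE {n} (e : rel 'I_n) (v : 'cV[R[i]]_n) : symmetric e ->
  laplacian_form e v *+ 2 =
  \sum_i \sum_j (e i j)%:R * ((v i 0 - v j 0) * conjc (v i 0 - v j 0)).
Proof.
move=> e_sym.
have formE : laplacian_form e v = \sum_i \sum_j conjc (v i 0) * ((e i j)%:R * (v i 0 - v j 0)).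
  by apply: eq_bigr => i _; rewrite map_laplacian_mulmxE mulr_sumr.
have formE' : laplacian_form e v =
    \sum_i \sum_j conjc (v j 0) * ((e i j)%:R * (v j 0 - v i 0)).
  rewrite formE exchange_big; apply: eq_bigr => i _; apply: eq_bigr => j _ /=.
  by rewrite e_sym.
rewrite mulr2n {1}formE formE' -big_split; apply: eq_bigr => i _ /=.
rewrite -big_split; apply: eq_bigr => j _ /=.
by rewrite rmorphB /=; ring.
Qed.

Lemma laplacian_form_ge0 {n} (e : rel 'I_n) (v : 'cV[R[i]]_n) : symmetric e ->
  0 <= laplacian_form e v.
Proof.
move=> /laplacian_formE formE; rewrite -(pmulrn_lge0 _ (isT : (0 < 2)%N)) formE.
by do 2!apply: sumr_ge0 => ? _; rewrite mulr_ge0 ?mulcJ_ge0.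
Qed.

Lemma laplacian_form_eq0 {n} (e : rel 'I_n) (v : 'cV[R[i]]_n) : symmetric e ->
  laplacian_form e v = 0 -> forall i j, connect e i j -> v i 0 = v j 0.
Proof.
move=> e_sym form0.
have term_ge0 i j : 0 <= (e i j)%:R * ((v i 0 - v j 0) * conjc (v i 0 - v j 0)).
  by rewrite mulr_ge0 ?mulcJ_ge0.
have edge_eq i j : e i j -> v i 0 = v j 0.
  move=> eij; have := laplacian_formE e v e_sym; rewrite form0 mul0rn => /esym.
  move/psumr_eq0P => /(_ (fun k _ => sumr_ge0 _ (fun j _ => term_ge0 k j)) i isT).
  move/psumr_eq0P => /(_ (fun j _ => term_ge0 i j) j isT); rewrite eij mul1r.
  by move/eqP; rewrite mulf_eq0 conjc_eq0 orbb subr_eq0 => /eqP.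
move=> i j; have : fingraph.closed e [pred k | v k 0 == v i 0].
  by move=> k k' /edge_eq vkk'; rewrite !inE vkk'.
by move/closed_connect => /[apply]; rewrite !inE eqxx => /esym /eqP.
Qed.
End laplacian.

Section group_eigen.
Context {R : realType}.
Local Notation toC := (real_complex R).
Context {n m : nat} {g : 'I_n -> 'I_m} {e : rel 'I_n} {w : 'I_n -> R}.
Hypothesis e_sym : symmetric e.
Hypothesis e_group : forall i j, e i j -> g i = g j.
Hypothesis group_connect : forall i j, g i = g j -> connect e i j.
Hypothesis w_gt0 : forall i, 0 < w i.
Local Notation LapC := (map_mx toC (laplacian R n e)).

Lemma group_weight_gt0 i : 0 < \sum_(j | g j == g i) toC (w j).
Proof.
rewrite (bigD1 i) //=; apply: ltr_pwDl; first by rewrite ltcR.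
by apply: sumr_ge0 => j _; rewrite lecR ltW.
Qed.

(* An empty group has weight [0]; its junk mean [0 / 0 = 0] is never used. *)
Lemma exists_group_centering (u : 'I_n -> R[i]) :
  exists r : 'I_m -> R[i], forall p, \sum_(i | g i == p) toC (w i) * (u i - r (g i)) = 0.
Proof.
exists (fun p => (\sum_(i | g i == p) toC (w i) * u i) / \sum_(i | g i == p) toC (w i)) => p.
case: (pickP (fun i => g i == p)) => [i /eqP gi | no_i]; last by rewrite big_pred0.
under eq_bigr => j /eqP -> do rewrite mulrBr.
rewrite sumrB -mulr_suml [_ * (_ / _)]mulrC divfK ?subrr // -gi gt_eqF //.
exact: group_weight_gt0.
Qed.

Lemma group_centered_orthogonal (v : 'I_n -> R[i]) :
  (forall p, \sum_(i | g i == p) toC (w i) * v i = 0) ->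
  forall t : 'I_m -> R[i], \sum_i toC (w i) * conjc (v i) * t (g i) = 0.
Proof.
move=> v_centered t; rewrite (partition_big g xpredT) //=; apply: big1 => p _.
rewrite (eq_bigr (fun i => conjc (toC (w i) * v i) * t p)); last first.
  by move=> i /eqP ->; rewrite rmorphM; congr (_ * _ * _); exact: (esym (conjc_real _)).
by rewrite -mulr_suml -rmorph_sum /= v_centered conjc0 mul0r.
Qed.

Lemma group_centered_form_eq0 (v : 'cV[R[i]]_n) :
  (forall p, \sum_(i | g i == p) toC (w i) * v i 0 = 0) -> laplacian_form e v = 0 ->
  forall i, v i 0 = 0.
Proof.
move=> v_centered form0 i.
have v_const j : g j = g i -> v j 0 = v i 0.
  by move=> /group_connect; apply: laplacian_form_eq0.
have := v_centered (g i); under eq_bigr => j /eqP /v_const -> do rewrite mulrC.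
rewrite -mulr_sumr => /eqP; rewrite mulf_eq0 (gt_eqF (group_weight_gt0 i)) orbF.
by move/eqP.
Qed.

(* Pairing the equation with the [w]-weighted conjugate of the group-centered part
   [v] of [u] eliminates [y] and leaves [laplacian_form e v = z * \sum_i w i |v i|^2]. *)
Lemma group_eigen (z : R[i]) (u : 'cV[R[i]]_n) (y : 'I_m -> R[i]) :
  (forall i, (LapC *m u) i 0 / toC (w i) + y (g i) = z * u i 0) ->
  0 < z \/ exists r : 'I_m -> R[i], forall i, u i 0 = r (g i).
Proof.
move=> eigen_u; have [r r_centers] := exists_group_centering (fun i => u i 0).
pose v := \col_i (u i 0 - r (g i)).
have v_centered p : \sum_(i | g i == p) toC (w i) * v i 0 = 0.
  by rewrite -[RHS](r_centers p); apply: eq_bigr => i _; rewrite mxE.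
have orth := group_centered_orthogonal (fun i => v i 0) v_centered.
have Lu_Lv i : (LapC *m u) i 0 = (LapC *m v) i 0.
  rewrite !map_laplacian_mulmxE; apply: eq_bigr => j _; rewrite !mxE.
  by case: (boolP (e i j)) => [/e_group -> | _]; rewrite ?mul0r // opprB addrA subrK.
have uE i : u i 0 = v i 0 + r (g i) by rewrite mxE subrK.
have wi_neq0 i : toC (w i) != 0 by rewrite gt_eqF // ltcR.
pose Q := \sum_i toC (w i) * conjc (v i 0) * v i 0.
have form_Q : laplacian_form e v = z * Q.
  have eigen_v i : conjc (v i 0) * (LapC *m v) i 0
      + toC (w i) * conjc (v i 0) * y (g i) = z * (toC (w i) * conjc (v i 0) * u i 0).
    rewrite -Lu_Lv (_ : z * _ = toC (w i) * conjc (v i 0) * (z * u i 0)); last by ring.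
    by rewrite -eigen_u; field; exact: wi_neq0.
  have : \sum_i (conjc (v i 0) * (LapC *m v) i 0 + toC (w i) * conjc (v i 0) * y (g i)) =
      \sum_i z * (toC (w i) * conjc (v i 0) * u i 0) by apply: eq_bigr => i _; apply: eigen_v.
  rewrite big_split /= orth addr0 /laplacian_form => ->.
  rewrite -mulr_sumr; congr (_ * _).
  under eq_bigr do rewrite uE mulrDr.
  by rewrite big_split /= (group_centered_orthogonal _ v_centered) addr0.
have Q_ge0 : 0 <= Q.
  apply: sumr_ge0 => i _; rewrite -mulrA mulr_ge0 //; first by rewrite lecR ltW.
  by rewrite mulrC mulcJ_ge0.
have [form0|form_neq0] := eqVneq (laplacian_form e v) 0.
  by right; exists r => i; rewrite uE group_centered_form_eq0 ?add0r.
left; have Q_neq0 : Q != 0 by apply: contra_neq form_neq0; rewrite form_Q => ->; rewrite mulr0.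
have -> : z = laplacian_form e v / Q by rewrite form_Q mulfK.
by rewrite divr_gt0 // lt_def ?form_neq0 ?Q_neq0 ?laplacian_form_ge0.
Qed.
End group_eigen.

Section selection_matrix.
Context {R : realType}.

Lemma map_selection_mulmxE (S : comNzRingType) (f : {rmorphism R -> S}) {n n'}
    (h : 'I_n -> 'I_n') {m} (w : 'M[S]_(n', m)) i k :
  (map_mx f (\matrix_(i, p) ((h i == p)%:R : R)) *m w) i k = w (h i) k.
Proof.
rewrite mxE (bigD1 (h i)) //= !mxE eqxx rmorph1 mul1r big1 ?addr0 // => p hp.
by rewrite !mxE eq_sym (negbTE hp) rmorph0 mul0r.
Qed.

Lemma selection_mulmx n n' n'' (h : 'I_n -> 'I_n') (h' : 'I_n' -> 'I_n'') :
  \matrix_(i, p) ((h i == p)%:R : R) *m \matrix_(q, p) ((h' q == p)%:R : R) =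
  \matrix_(i, p) ((h' (h i) == p)%:R : R).
Proof.
apply/matrixP => i p; rewrite !mxE.
have := map_selection_mulmxE _ idfun h (\matrix_(q, p) ((h' q == p)%:R : R)) i p.
by rewrite map_mx_id // !mxE.
Qed.

End selection_matrix.

Section constant_vectors.
Context {R : realType}.

Lemma mulmx_const_colE {n} (w : 'rV[R]_n) (v : 'cV[R]_n) i :
  (forall j, v j 0 = v i 0) -> (w *m v) 0 0 = (\sum_j w 0 j) * v i 0.
Proof. by move=> v_const; rewrite mxE mulr_suml; apply: eq_bigr => j _; rewrite v_const. Qed.

Lemma consensus_value {n} {w : 'rV[R]_n} {v x0 : 'cV[R]_n} :
  (forall j, 0 < w 0 j) -> (forall i j, v i 0 = v j 0) -> w *m v = w *m x0 ->
  let one := const_mx 1 : 'cV[R]_n in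
  v = ((one^T *m diag_mx w *m one) 0 0)^-1 *: (one *m one^T *m diag_mx w *m x0).
Proof.
move=> w_gt0 v_const wv one; have one_w : one^T *m diag_mx w = w.
  by apply/rowP => j; rewrite mul_mx_diag !mxE mul1r.
have -> : one^T *m diag_mx w *m one = w *m one by rewrite one_w.
have -> : one *m one^T *m diag_mx w *m x0 = one *m (w *m v).
  by rewrite wv -!mulmxA (mulmxA one^T) one_w.
apply/matrixP => i k; rewrite (ord1 k) !mxE big_ord1 mxE mul1r.
have sum_gt0 : 0 < \sum_j w 0 j.
  by rewrite (bigD1 i) //= ltr_pwDl // sumr_ge0 // => j _; apply: ltW.
rewrite (mulmx_const_colE _ _ i (v_const^~ i)).
by under eq_bigr do rewrite mxE mulr1; rewrite mulKf // gt_eqF.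
Qed.
End constant_vectors.

Section hierarchy.
Variables (R : realType) (M : nat) (N : nat -> nat).
Variables (g : forall l, 'I_(N l) -> 'I_(N l.+1)) (a : 'I_(N 0%N) -> R).
Variables (adj : forall l, rel 'I_(N l)) (C : forall l, 'M[R]_(N l.+1, N l)).
Hypothesis NM : N M = 1%N.
Hypothesis g_surj : forall l, (l < M)%N -> forall p : 'I_(N l.+1), exists i, g l i = p.
Hypothesis adj_sym : forall l, (l < M)%N -> symmetric (adj l).
Hypothesis adj_group : forall l, (l < M)%N -> forall i j, adj l i j -> g l i = g l j.
Hypothesis adj_connect :
  forall l, (l < M)%N -> forall i j, g l i = g l j -> connect (adj l) i j.
Hypothesis a_gt0 : forall i, 0 < a i.
Hypothesis C_group : forall l, (l.+1 < M)%N -> forall p i, g l i != p -> C l p i = 0.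
Hypothesis C_sum1 : forall l, (l.+1 < M)%N -> forall p, \sum_i C l p i = 1.

Local Notation B := (Bchain R N g).
Local Notation G := (grpB R N g).
Local Notation Cc := (Cchain R N C).
Local Notation W := (wts R N g a).
Local Notation K := (Kmat R N g a).
Local Notation Lap l := (laplacian R (N l) (adj l)).
Local Notation layer := (layerL R N g a adj C).
Local Notation L := (hierL R N g a adj C M).
Local Notation one := (const_mx 1).
Local Notation toC := (real_complex R).
Local Notation MC A := (map_mx toC A).

Lemma wts_gt0 l : (l <= M)%N -> forall i, 0 < W l i.
Proof.
elim: l => [|l IHl] lM i /=; first exact: a_gt0.
have {}IHl := IHl (ltnW lM).
have [j <-] := g_surj _ lM i; rewrite (bigD1 j) //=; apply: ltr_pwDl => //.
by apply: sumr_ge0 => k _; apply: ltW.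
Qed.

Lemma laplacian_grpB l : (l < M)%N -> Lap l *m G l = 0.
Proof.
by move=> lM; apply: laplacian_mulmx_eq0 => i j p /(adj_group _ lM) gij; rewrite !mxE gij.
Qed.

Lemma laplacian_const l k : Lap l *m (one : 'M[R]_(N l, k)) = 0.
Proof. by apply: laplacian_mulmx_eq0 => i j p _; rewrite !mxE. Qed.

Lemma const_laplacian l : (l < M)%N -> (one : 'rV[R]_(N l)) *m Lap l = 0.
Proof.
move=> lM; apply: trmx_inj.
by rewrite trmx_mul (trmx_laplacian _ (adj_sym _ lM)) trmx_const laplacian_const trmx0.
Qed.

Lemma C_grpB l : (l.+1 < M)%N -> C l *m G l = 1%:M.
Proof.
move=> lM; apply/matrixP => p q; rewrite !mxE.
transitivity (\sum_i C l p i * (p == q)%:R); last by rewrite -mulr_suml C_sum1 // mul1r.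
apply: eq_bigr => i _; rewrite mxE.
by case: (eqVneq (g l i) p) => [-> // | /(C_group _ lM) ->]; rewrite !mul0r.
Qed.

Lemma Cchain_Bchain l : (l < M)%N -> Cc l *m B l = 1%:M.
Proof.
elim: l => [|l IHl] lM /=; first by rewrite mul1mx.
by rewrite -!mulmxA (mulmxA (Cc l)) (IHl (ltnW lM)) mul1mx C_grpB.
Qed.

Lemma Cchain_const l : (l < M)%N -> Cc l *m (one : 'cV[R]_(N 0%N)) = one.
Proof.
elim: l => [|l IHl] lM /=; first by rewrite mul1mx.
rewrite -mulmxA (IHl (ltnW lM)); apply/matrixP => p q; rewrite !mxE.
by rewrite -[RHS](C_sum1 _ lM p); apply: eq_bigr => i _; rewrite mxE mulr1.
Qed.

Lemma row_Bchain l : (\row_i a i) *m B l = \row_p W l p.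
Proof.
elim: l => [|l IHl] /=; first by rewrite mulmx1; apply/rowP => i; rewrite !mxE.
rewrite mulmxA IHl; apply/rowP => p; rewrite !mxE [RHS]big_mkcond /=.
by apply: eq_bigr => i _; rewrite !mxE; case: (g l i == p); rewrite ?mulr1 ?mulr0.
Qed.

Lemma row_wts_Kmat l : (l <= M)%N -> (\row_p W l p) *m K l = one.
Proof.
by move=> lM; apply/rowP => p; rewrite mul_mx_diag !mxE divff // gt_eqF ?wts_gt0.
Qed.

Lemma row_hierL : (\row_i a i) *m L = 0.
Proof.
rewrite mulmx_sumr big1 // => k _; have kM := ltn_ord k.
by rewrite !mulmxA row_Bchain (row_wts_Kmat _ (ltnW kM)) (const_laplacian _ kM) !mul0mx.
Qed.

Lemma hierL_const : L *m (one : 'cV[R]_(N 0%N)) = 0.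
Proof.
rewrite mulmx_suml big1 // => k _.
by rewrite -!mulmxA Cchain_const // laplacian_const !mulmx0.
Qed.

Lemma Bchain_split j k : (j <= k)%N -> exists P : 'M[R]_(N j, N k), B k = B j *m P.
Proof.
elim: k => [|k IHk]; first by rewrite leqn0 => /eqP ->; exists 1%:M; rewrite mulmx1.
rewrite leq_eqVlt => /orP[/eqP -> | /IHk[P BkP]]; first by exists 1%:M; rewrite mulmx1.
by exists (P *m G k); rewrite /= BkP mulmxA.
Qed.

Lemma layerL_Bchain_succ k : (k < M)%N -> layer k *m B k.+1 = 0.
Proof.
move=> kM; rewrite /layerL /= -!mulmxA (mulmxA (Cc k)) (Cchain_Bchain _ kM) mul1mx.
by rewrite (laplacian_grpB _ kM) !mulmx0.
Qed.

Lemma Cchain_hierL_Bchain l : (l < M)%N ->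
  exists Y, Cc l *m L *m B l = K l *m Lap l + G l *m Y.
Proof.
move=> lM; pose lifted (A : 'M[R]_(N l)) := exists Y, A = G l *m Y.
have lifted_layer (k : 'I_M) : k != Ordinal lM -> lifted (Cc l *m layer k *m B l).
  move=> /eqP /val_eqP /= kl; case: (ltngtP k l) kl => // [kl | lk] _.
    have [P ->] := Bchain_split _ _ kl; exists 0.
    by rewrite mulmx0 -mulmxA (mulmxA (layer k)) layerL_Bchain_succ ?mul0mx ?mulmx0.
  rewrite /layerL; have [P ->] := Bchain_split _ _ lk.
  exists (P *m (K k *m Lap k *m Cc k *m B l)).
  by rewrite /= !mulmxA (Cchain_Bchain _ lM) mul1mx.
rewrite mulmx_sumr mulmx_suml (bigD1 (Ordinal lM)) //=.
have [Y ->] : lifted (\sum_(k < M | k != Ordinal lM) Cc l *m layer k *m B l).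
  apply: big_ind => [|_ _ [Y1 ->] [Y2 ->]|]; last exact: lifted_layer.
    by exists 0; rewrite mulmx0.
  by exists (Y1 + Y2); rewrite mulmxDr.
exists Y; congr (_ + _).
by rewrite /layerL -!mulmxA (Cchain_Bchain _ lM) mulmx1 !mulmxA (Cchain_Bchain _ lM) mul1mx.
Qed.

Fixpoint ancestor l : 'I_(N 0%N) -> 'I_(N l) :=
  match l with 0%N => id | l'.+1 => fun i => g l' (ancestor l' i) end.

Lemma Bchain_selection l : B l = \matrix_(i, p) ((ancestor l i == p)%:R : R).
Proof.
elim: l => [|l IHl] /=; first by apply/matrixP => i p; rewrite !mxE.
by rewrite IHl selection_mulmx.
Qed.

(* Descent through the layers: [u = B l *m w] either yields [0 < z] at layer [l]
   or lifts to layer [l.+1]; at the top layer [N M = 1] makes [B M *m w] constant. *)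
Lemma hierL_eigen (z : R[i]) (u : 'cV[R[i]]_(N 0%N)) :
  MC L *m u = z *: u -> 0 < z \/ forall i j, u i 0 = u j 0.
Proof.
suff lift d l (w : 'cV[R[i]]_(N l)) : (l + d = M)%N ->
    MC L *m (MC (B l) *m w) = z *: (MC (B l) *m w) ->
    0 < z \/ forall i j, (MC (B l) *m w) i 0 = (MC (B l) *m w) j 0.
  by have := lift M 0%N u (add0n M); rewrite /= map_mx1 mul1mx.
elim: d l w => [|d IHd] l w ld eig.
  have Nl1 : N l = 1%N by rewrite -NM -ld addn0.
  have val0 (p : 'I_(N l)) : val p = 0%N.
    by apply/eqP; rewrite -leqn0 -ltnS -[1%N]Nl1; exact: ltn_ord.
  right => i j; rewrite Bchain_selection !map_selection_mulmxE; congr (w _ 0).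
  by apply: val_inj; rewrite !val0.
have lM : (l < M)%N by rewrite -ld addnS ltnS leq_addr.
have [Y CLB] := Cchain_hierL_Bchain _ lM.
have eig_l i : (MC (Lap l) *m w) i 0 / toC (W l i) + (MC Y *m w) (g l i) 0 = z * w i 0.
  have CLBw : MC (Cc l *m L *m B l) *m w = z *: w.
    rewrite !map_mxM -!mulmxA eig -scalemxAr mulmxA -map_mxM (Cchain_Bchain _ lM).
    by rewrite map_mx1 mul1mx.
  move: CLBw; rewrite CLB map_mxD mulmxDl !map_mxM -!mulmxA => /matrixP/(_ i 0).
  have K_entry (t : 'cV[R[i]]_(N l)) : (MC (K l) *m t) i 0 = (toC (W l i))^-1 * t i 0.
    by rewrite /Kmat map_diag_mx mul_diag_mx !mxE fmorphV.
  by rewrite [in LHS]mxE [in RHS]mxE /grpB map_selection_mulmxE K_entry mulrC.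
have [|[r wr]] := group_eigen (adj_sym _ lM) (adj_group _ lM) (adj_connect _ lM)
  (wts_gt0 _ (ltnW lM)) z w (fun p => (MC Y *m w) p 0) eig_l; first by left.
have Bw : MC (B l) *m w = MC (B l.+1) *m \col_p r p.
  apply/matrixP => i k; rewrite (ord1 k) !Bchain_selection !map_selection_mulmxE.
  by rewrite wr mxE.
by rewrite Bw in eig *; apply: IHd eig; rewrite addSnnS.
Qed.

Lemma hierL_nonneg_spectrum : nonneg_spectrum L.
Proof.
move=> z u u_neq0 eig; case: (hierL_eigen _ _ eig) => [/ltW // | u_const].
have Lu : MC L *m u = 0.
  apply/matrixP => i k; rewrite (ord1 k) [RHS]mxE.
  transitivity ((MC L *m MC (one : 'cV[R]_(N 0%N))) i 0 * u i 0).
    by rewrite !mxE mulr_suml; apply: eq_bigr => j _; rewrite !mxE rmorph1 mulr1 (u_const j i).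
  by rewrite -map_mxM hierL_const map_mx0 mxE mul0r.
by move: eig; rewrite Lu => /esym /eqP; rewrite scaler_eq0 (negbTE u_neq0) orbF => /eqP ->.
Qed.

Lemma hierL_ker (v : 'cV[R]_(N 0%N)) : L *m v = 0 -> forall i j, v i 0 = v j 0.
Proof.
move=> Lv; have : MC L *m MC v = 0 *: MC v by rewrite -map_mxM Lv map_mx0 scale0r.
case/hierL_eigen => [|v_const i j]; first by rewrite ltxx.
by have := v_const i j; rewrite !mxE => /complexI.
Qed.

Lemma hierL_ker_sq (v : 'cV[R]_(N 0%N)) : L *m (L *m v) = 0 -> L *m v = 0.
Proof.
move=> /hierL_ker Lv_const; apply/matrixP => i k; rewrite (ord1 k) [RHS]mxE.
have : (\row_i a i *m (L *m v)) 0 0 = 0 by rewrite mulmxA row_hierL mul0mx mxE.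
rewrite (mulmx_const_colE _ _ i (Lv_const^~ i)) => /eqP.
rewrite mulf_eq0 => /orP[|/eqP //]; rewrite gt_eqF //.
by rewrite (bigD1 i) //= ltr_pwDl ?mxE // sumr_ge0 // => j _; rewrite mxE ltW.
Qed.
End hierarchy.

Theorem theorem3 (R : realType) (M : nat) (N : nat -> nat)
  (g : forall l, 'I_(N l) -> 'I_(N l.+1))
  (a : 'I_(N 0%N) -> R)
  (adj : forall l, rel 'I_(N l))
  (C : forall l, 'M[R]_(N l.+1, N l))
  (x : R -> 'cV[R]_(N 0%N)) (x0 : 'cV[R]_(N 0%N)) :
  (2 <= M)%N ->
  N M = 1%N ->
  (* groups: consecutive numbering, each group nonempty *)
  (forall l, (l < M)%N -> forall i j : 'I_(N l), (i <= j)%N -> (g l i <= g l j)%N) ->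
  (forall l, (l < M)%N -> forall p : 'I_(N l.+1), exists i, g l i = p) ->
  (* each group carries a connected undirected simple graph *)
  (forall l, (l < M)%N -> symmetric (adj l)) ->
  (forall l, (l < M)%N -> irreflexive (adj l)) ->
  (forall l, (l < M)%N -> forall i j, adj l i j -> g l i = g l j) ->
  (forall l, (l < M)%N -> forall i j, g l i = g l j -> connect (adj l) i j) ->
  (* positive weights *)
  (forall i, 0 < a i) ->
  (* C^(l)_p : nonnegative entries summing to 1, supported on group p *)
  (forall l, (l.+1 < M)%N -> forall p i, 0 <= C l p i) ->
  (forall l, (l.+1 < M)%N -> forall p i, g l i != p -> C l p i = 0) ->
  (forall l, (l.+1 < M)%N -> forall p, \sum_i C l p i = 1) ->
  (* x solves xdot = - L x on [0, oo) with x(0) = x0 *)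
  x 0 = x0 ->
  x t @[t --> (0:R)^'+] --> x0 ->
  (forall t : R, 0 < t -> is_derive t 1 x (- (hierL R N g a adj C M *m x t))) ->
  let one := const_mx 1 : 'cV[R]_(N 0%N) in
  let K := diag_mx (\row_i a i) in
  x t @[t --> +oo] -->
    ((one^T *m K *m one) 0 0)^-1 *: (one *m one^T *m K *m x0).
Proof.
move=> _ NM _ g_surj adj_sym _ adj_group adj_connect a_gt0 _ C_group C_sum1 _ x_x0 dx one K.
set L := hierL R N g a adj C M in dx *.
have spL : nonneg_spectrum L by apply: hierL_nonneg_spectrum.
have ker2L (v : 'cV[R]_(N 0%N)) : L *m (L *m v) = 0 -> L *m v = 0.
  by apply: hierL_ker_sq.
have [xinf x_cvg Lxinf] := cvg_semistable_ode spL ker2L dx.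
have aL : \row_i a i *m L = 0 by apply: row_hierL.
have a_xinf : \row_i a i *m xinf = \row_i a i *m x0.
  have ax_cst : (fun t => \row_i a i *m x t) @ +oo --> \row_i a i *m x0.
    apply: cvg_near_cst; near=> t; apply: (linear_ode_conserved aL x_x0 dx).
    by near: t; apply: nbhs_pinfty_gt; exact: num_real.
  exact: cvg_unique (cvg_mulmx (\row_i a i) x_cvg) ax_cst.
have xinf_const : forall i j, xinf i 0 = xinf j 0 by move: Lxinf; apply: hierL_ker.
rewrite /one /K -(consensus_value _ xinf_const a_xinf) // => j.
by rewrite mxE a_gt0.
Unshelve. all: by end_near. Qed.
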